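(* Consider the closed-loop system $\dot p_i=\mathrm{sat}(v_i^{\mathrm{ms}}(\mathbf p)+v_i^{\mathrm{cv}}(\mathbf p))$, $i=1,\dots,n$, defined in the context (with true masses $P_k(\mathbf p)$), and let $S\subset\mathbb{R}^d$ (the desired shape) be a closed convex set containing all sample points $q_1,\dots,q_m$. Then for every initial state $\mathbf p(t_0)\in\mathbb{R}^{dn}$ and every $i\in\{1,\dots,n\}$, $\operatorname{dist}(p_i(t),S)\to0$ as $t\to\infty$; i.e., all robots converge to the desired shape.
   Context: Setting: $n\ge2$ robots in $\mathbb{R}^d$, positions $p_i\in\mathbb{R}^d$, configuration $\mathbf p=[p_1^\top,\dots,p_n^\top]^\top\in\mathbb{R}^{dn}$; fixed sample points $q_1,\dots,q_m\in\mathbb{R}^d$; constants $\beta>0$, $\sigma_1>0$, $\sigma_2>0$, $\varepsilon\in(0,1)$, $r_{\mathrm{avoid}}>0$, $v_{\max}>0$. Mass: $P_k(\mathbf p)=\frac1n\sum_{i=1}^n e^{-\beta\|q_k-p_i\|^2}$. Meanshift command: $v_i^{\mathrm{ms}}(\mathbf p)=\dfrac{\frac{\sigma_1}{m}\sum_{k=1}^m P_k(\mathbf p)^{-1}e^{-\beta\|q_k-p_i\|^2}(q_k-p_i)}{\sum_{k=1}^m P_k(\mathbf p)^{-1}e^{-\beta\|q_k-p_i\|^2}}$. Repulsive term: $\tilde v_i^{\mathrm{cv}}=\sigma_2\sum_{j\ne i,\ \|p_i-p_j\|\le r_{\mathrm{avoid}}}\frac{r_{\mathrm{avoid}}-\|p_i-p_j\|}{\|p_i-p_j\|+\varepsilon}(p_i-p_j)$.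 With $\varphi=\min\{\|v_i^{\mathrm{ms}}\|^2/\varepsilon,1\}$, the gain is $\kappa_2=\varphi$ if $(v_i^{\mathrm{ms}})^\top\tilde v_i^{\mathrm{cv}}\ge0$ and $\kappa_2=\varphi\min\{-(1-\varepsilon)\|v_i^{\mathrm{ms}}\|^2/((v_i^{\mathrm{ms}})^\top\tilde v_i^{\mathrm{cv}}),1\}$ if $(v_i^{\mathrm{ms}})^\top\tilde v_i^{\mathrm{cv}}<0$; collision-avoidance command $v_i^{\mathrm{cv}}=\kappa_2\tilde v_i^{\mathrm{cv}}$. Saturation: $\mathrm{sat}(z)=v_{\max}z/\|z\|$ if $\|z\|>v_{\max}$, and $\mathrm{sat}(z)=z$ otherwise. *)

From HB Require Import structures.
From mathcomp Require Import all_boot all_order all_algebra.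
From mathcomp Require Import all_classical all_reals all_analysis.
Set Implicit Arguments. Unset Strict Implicit. Unset Printing Implicit Defensive.
Import Order.TTheory GRing.Theory Num.Theory.
Import numFieldNormedType.Exports.
Local Open Scope classical_set_scope.
Local Open Scope ring_scope.

Section Defs.
Variable R : realType.

Definition dotE d (u v : 'rV[R]_d) : R := \sum_(j < d) u 0 j * v 0 j.
Definition normE d (v : 'rV[R]_d) : R := Num.sqrt (dotE v v).

Definition distE d (x : 'rV[R]_d) (S : set 'rV[R]_d) : R :=
  inf [set normE (x - s) | s in S].

Definition convex_setE d (S : set 'rV[R]_d) : Prop :=
  forall x y, S x -> S y -> forall l : R, 0 <= l <= 1 ->
    S (l *: x + (1 - l) *: y).

Variables (d n m : nat) (q : 'I_m -> 'rV[R]_d).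
Variables (beta sigma1 sigma2 eps ravoid vmax : R).

Definition kw (x y : 'rV[R]_d) : R := expR (- beta * normE (x - y) ^+ 2).

Definition mass (p : 'I_n -> 'rV[R]_d) (k : 'I_m) : R :=
  n%:R^-1 * \sum_(i < n) kw (q k) (p i).

Definition v_ms (p : 'I_n -> 'rV[R]_d) (i : 'I_n) : 'rV[R]_d :=
  ((sigma1 / m%:R) / (\sum_(k < m) (mass p k)^-1 * kw (q k) (p i))) *:
    \sum_(k < m) ((mass p k)^-1 * kw (q k) (p i)) *: (q k - p i).

Definition v_rep (p : 'I_n -> 'rV[R]_d) (i : 'I_n) : 'rV[R]_d :=
  sigma2 *: \sum_(j < n | (j != i) && (normE (p i - p j) <= ravoid))
    ((ravoid - normE (p i - p j)) / (normE (p i - p j) + eps)) *: (p i - p j).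

Definition kappa2 (p : 'I_n -> 'rV[R]_d) (i : 'I_n) : R :=
  let vm := v_ms p i in
  let vr := v_rep p i in
  let phi := Num.min (normE vm ^+ 2 / eps) 1 in
  if 0 <= dotE vm vr then phi
  else phi * Num.min (- (1 - eps) * normE vm ^+ 2 / dotE vm vr) 1.

Definition v_cv (p : 'I_n -> 'rV[R]_d) (i : 'I_n) : 'rV[R]_d :=
  kappa2 p i *: v_rep p i.

Definition sat (z : 'rV[R]_d) : 'rV[R]_d :=
  if vmax < normE z then (vmax / normE z) *: z else z.

Definition closed_loop (p : 'I_n -> 'rV[R]_d) (i : 'I_n) : 'rV[R]_d :=
  sat (v_ms p i + v_cv p i).

End Defs.

From HB Require Import structures.
From mathcomp Require Import all_boot all_order all_algebra.
From mathcomp Require Import all_classical all_reals all_analysis.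
From mathcomp Require Import ring lra.
Import Order.TTheory GRing.Theory Num.Theory.
Import numFieldNormedType.Exports.
Local Open Scope classical_set_scope.
Local Open Scope ring_scope.

(* The Lyapunov function [H = sum_k ln P_k] is at most 0, and along the flow
   [dH/dt = (2 beta / n) sum_j u_j . pdot_j] where
   [u_j = sum_k P_k^-1 e^(-beta |q_k - p_j|^2) (q_k - p_j)] is a positive multiple of [v_j^ms].
   The gain [kappa_2] keeps [v^ms . (v^ms + v^cv) >= eps |v^ms|^2] and saturation only rescales
   by a positive factor, so every term is nonnegative.  As [v_i^ms] is [sigma1 / m] times the
   vector from [p_i] to a convex combination of the [q_k], which lies in [S],
   [|v_i^ms| >= (sigma1 / m) dist(p_i, S)].  Far from the samples [v^ms] pulls back harder than
   the bounded [v^cv] pushes, so [p_i] stays bounded; this bounds the weights below and the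
   velocities above, whence [dH/dt >= kappa dist(p_i, S)^2] with [kappa > 0].  Since [H] is
   bounded and [dist(p_i(t), S)] is [v_max]-Lipschitz, a Barbalat-type argument gives
   [dist(p_i(t), S) -> 0]. *)

Section Euclidean.
Context {R : realType} {d : nat}.
Implicit Types (u v w x y s : 'rV[R]_d) (a : R).

Lemma dotEC u v : dotE u v = dotE v u.
Proof. by apply: eq_bigr => j _; rewrite mulrC. Qed.

Lemma dotEDl u v w : dotE (u + v) w = dotE u w + dotE v w.
Proof. by rewrite /dotE -big_split; apply: eq_bigr => j _; rewrite !mxE mulrDl. Qed.

Lemma dotEZl a u w : dotE (a *: u) w = a * dotE u w.
Proof. by rewrite /dotE mulr_sumr; apply: eq_bigr => j _; rewrite !mxE mulrA. Qed.

Lemma dotENl u w : dotE (- u) w = - dotE u w.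
Proof. by rewrite -scaleN1r dotEZl mulN1r. Qed.

Lemma dotEBl u v w : dotE (u - v) w = dotE u w - dotE v w.
Proof. by rewrite dotEDl dotENl. Qed.

Lemma dotEDr u v w : dotE w (u + v) = dotE w u + dotE w v.
Proof. by rewrite dotEC dotEDl !(dotEC w). Qed.

Lemma dotEZr a u w : dotE w (a *: u) = a * dotE w u.
Proof. by rewrite dotEC dotEZl dotEC. Qed.

Lemma dotEBr u v w : dotE w (u - v) = dotE w u - dotE w v.
Proof. by rewrite dotEC dotEBl !(dotEC w). Qed.

Lemma dotE0l w : dotE 0 w = 0.
Proof. by rewrite /dotE big1 // => j _; rewrite mxE mul0r. Qed.

Lemma dotE0r w : dotE w 0 = 0.
Proof. by rewrite dotEC dotE0l. Qed.

Lemma dotE_suml m (F : 'I_m -> 'rV[R]_d) w :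
  dotE (\sum_(k < m) F k) w = \sum_(k < m) dotE (F k) w.
Proof. by elim/big_rec2: _ => [|k x y _ <-]; rewrite ?dotE0l ?dotEDl. Qed.

Lemma dotE_ge0 u : 0 <= dotE u u.
Proof. by apply: sumr_ge0 => j _; rewrite -expr2 sqr_ge0. Qed.

Lemma normE_ge0 u : 0 <= normE u.
Proof. exact: sqrtr_ge0. Qed.

Lemma normE_sqr u : normE u ^+ 2 = dotE u u.
Proof. by rewrite /normE sqr_sqrtr // dotE_ge0. Qed.

Lemma normE0 : normE (0 : 'rV[R]_d) = 0.
Proof. by rewrite /normE dotE0l sqrtr0. Qed.

Lemma normEZ a u : normE (a *: u) = `|a| * normE u.
Proof.
by rewrite /normE dotEZl dotEZr mulrA -expr2 sqrtrM ?sqr_ge0 // sqrtr_sqr.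
Qed.

Lemma normE_subC u v : normE (u - v) = normE (v - u).
Proof. by rewrite -opprB -scaleN1r normEZ normrN1 mul1r. Qed.

Lemma normE_eq0_dotE u v : normE u = 0 -> dotE u v = 0.
Proof.
move=> u0; have uu0 : dotE u u = 0 by rewrite -normE_sqr u0 expr0n.
have sq_ge0 (k : 'I_d) : true -> 0 <= u 0 k * u 0 k by rewrite -expr2 sqr_ge0.
have uj0 j : u 0 j = 0.
  by have /eqP := @psumr_eq0P _ _ _ _ sq_ge0 uu0 j isT; rewrite -expr2 sqrf_eq0 => /eqP.
by rewrite /dotE big1 // => j _; rewrite uj0 mul0r.
Qed.

Lemma dotE_le_normE u v : dotE u v <= normE u * normE v.
Proof.
have [u0|u0] := eqVneq (normE u) 0; first by rewrite normE_eq0_dotE // u0 mul0r.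
have [v0|v0] := eqVneq (normE v) 0; first by rewrite dotEC normE_eq0_dotE // v0 mulr0.
have uv_gt0 : 0 < normE u * normE v by rewrite mulr_gt0 // lt0r ?u0 ?v0 ?normE_ge0.
(* [0 <= | |v| u - |u| v |^2 = 2 |u| |v| (|u| |v| - u . v)] *)
have := dotE_ge0 (normE v *: u - normE u *: v).
rewrite !(dotEBl, dotEZl, dotEBr, dotEZr) -!normE_sqr (dotEC v u).
move: uv_gt0; set a := normE u; set b := normE v; set c := dotE u v => ab_gt0 h.
have : 0 <= 2 * (a * b) * (a * b - c) by nra.
by rewrite pmulr_rge0 ?subr_ge0 // mulr_gt0.
Qed.

Lemma ler_normED u v : normE (u + v) <= normE u + normE v.
Proof.
have : normE (u + v) ^+ 2 <= (normE u + normE v) ^+ 2.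
  rewrite normE_sqr dotEDl !dotEDr (dotEC v u) sqrrD -!normE_sqr.
  by have := dotE_le_normE u v; nra.
by rewrite ler_pXn2r // ?nnegrE ?addr_ge0 ?normE_ge0.
Qed.

Lemma ler_normE_sum {I : Type} (r : seq I) (P : pred I) (F : I -> 'rV[R]_d) :
  normE (\sum_(k <- r | P k) F k) <= \sum_(k <- r | P k) normE (F k).
Proof.
elim/big_rec2: _ => [|k x y _ h]; first by rewrite normE0.
by apply: le_trans (ler_normED _ _) _; rewrite lerD2l.
Qed.

Lemma distE_ge0 x (S : set 'rV[R]_d) : S !=set0 -> 0 <= distE x S.
Proof.
move=> [s Ss]; apply: lb_le_inf; first by exists (normE (x - s)), s.
by move=> _ [y _ <-]; apply: normE_ge0.
Qed.

Lemma distE_le_normE x s (S : set 'rV[R]_d) : S s -> distE x S <= normE (x - s).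
Proof.
move=> Ss; apply: ge_inf; last by exists s.
by exists 0 => _ [y _ <-]; apply: normE_ge0.
Qed.

Lemma distE_lipschitz x y (S : set 'rV[R]_d) :
  S !=set0 -> distE x S - normE (x - y) <= distE y S.
Proof.
move=> [s Ss]; apply: lb_le_inf; first by exists (normE (y - s)), s.
move=> _ [z Sz <-]; rewrite lerBlDr.
apply: le_trans (distE_le_normE x _ _ Sz) _.
have -> : x - z = (x - y) + (y - z) by rewrite addrA subrK.
by rewrite addrC ler_normED.
Qed.

Lemma convex_setE_comb (S : set 'rV[R]_d) : convex_setE S ->
  forall m (w : 'I_m -> R) (x : 'I_m -> 'rV[R]_d), (0 < m)%N ->
  (forall k, 0 < w k) -> (forall k, S (x k)) ->
  S ((\sum_(k < m) w k)^-1 *: \sum_(k < m) w k *: x k).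
Proof.
move=> convS [//|m] + + _; elim: m => [|m IH] w x w_gt0 Sx.
  by rewrite !big_ord1 scalerA mulVf ?gt_eqF // scale1r.
rewrite big_ord_recr /= [X in _ *: X]big_ord_recr /=.
set A := \sum_(k < m.+1) _; set B := \sum_(k < m.+1) _.
have SB := IH (fun k => w (widen_ord (leqnSn _) k)) (fun k => x (widen_ord (leqnSn _) k))
  (fun k => w_gt0 _) (fun k => Sx _).
have A_gt0 : 0 < A.
  by rewrite /A big_ord_recl ltr_pwDl // sumr_ge0 // => k _; apply/ltW.
have wA_gt0 : 0 < A + w ord_max by rewrite addr_gt0.
(* the new point is a convex combination of the old barycentre and [x ord_max] *)
have l01 : 0 <= A / (A + w ord_max) <= 1.
  by rewrite divr_ge0 ?(ltW A_gt0) ?(ltW wA_gt0) //= ler_pdivrMr // mul1r lerDl ltW.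
have := convS _ _ SB (Sx ord_max) _ l01.
congr S; rewrite !scalerA scalerDr scalerA; congr (_ + _).
  by rewrite mulrAC mulfV ?gt_eqF // mul1r.
by congr (_ *: _); field; rewrite gt_eqF.
Qed.

End Euclidean.

Section Commands.
Context {R : realType} {d : nat}.

Lemma kappa2_spec {n m} (q : 'I_m -> 'rV[R]_d) beta sigma1 sigma2 eps ravoid
    (P : 'I_n -> 'rV[R]_d) i :
  0 < eps < 1 ->
  let vm := v_ms q beta sigma1 P i in
  0 <= kappa2 q beta sigma1 sigma2 eps ravoid P i <= 1 /\
  eps * normE vm ^+ 2 <= dotE vm (vm + v_cv q beta sigma1 sigma2 eps ravoid P i).
Proof.
move=> /andP[eps_gt0 eps_lt1] vm; rewrite /v_cv /kappa2 -/vm.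
move: (v_rep _ _ _ _ _) => vr; rewrite dotEDr dotEZr -normE_sqr.
set phi := Num.min _ 1.
have phi01 : 0 <= phi <= 1.
  by rewrite le_min ler01 ge_min lexx orbT divr_ge0 ?sqr_ge0 ?ltW.
have vm2_ge0 := sqr_ge0 (normE vm).
case: ifP => [vmr_ge0|/negbT]; first by split => //; case/andP: phi01; nra.
rewrite -ltNge; set a := normE vm ^+ 2 in vm2_ge0 *; set b := dotE vm vr => b_lt0.
(* [r] is the gain that makes [vm . (vm + r vr)] exactly [eps |vm|^2] *)
set r := - (1 - eps) * a / b.
have rb : r * b = - (1 - eps) * a by rewrite /r mulfVK // lt_eqF.
have r_ge0 : 0 <= r.
  rewrite /r -mulrNN -invrN (mulNr (1 - eps)) opprK.
  by rewrite divr_ge0 ?oppr_ge0 ?(ltW b_lt0) // mulr_ge0 // subr_ge0 ltW.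
have rmin01 : 0 <= Num.min r 1 <= 1 by rewrite le_min r_ge0 ler01 ge_min lexx orbT.
have rminb : r * b <= Num.min r 1 * b by rewrite ler_wnM2r ?ge_min ?lexx // ltW.
move: phi01 rmin01 => /andP[phi_ge0 phi_le1] /andP[rmin_ge0 rmin_le1].
split; first by apply/andP; split; [apply: mulr_ge0 | apply: mulr_ile1].
have := ler_wpM2l phi_ge0 rminb; rewrite rb => h.
have : 0 <= (1 - phi) * ((1 - eps) * a).
  by rewrite mulr_ge0 ?subr_ge0 // mulr_ge0 // subr_ge0 ltW.
rewrite -mulrA; lra.
Qed.

Lemma sat_scale vmax (z : 'rV[R]_d) : 0 < vmax ->
  exists2 f, sat vmax z = f *: z & vmax / (vmax + normE z) <= f <= 1.
Proof.
move=> vmax_gt0; have z_ge0 := normE_ge0 z.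
have vz_gt0 : 0 < vmax + normE z by rewrite ltr_pwDl.
rewrite /sat; case: ifPn => [vmax_lt|_]; last first.
  exists 1; first by rewrite scale1r.
  by rewrite lexx andbT ler_pdivrMr // mul1r lerDl.
have z_gt0 : 0 < normE z by apply: lt_trans vmax_lt.
exists (vmax / normE z) => //.
by rewrite ler_pM2l // lef_pV2 ?posrE // lerDr ltW //= ler_pdivrMr // mul1r ltW.
Qed.

Lemma normE_sat_le vmax (z : 'rV[R]_d) : 0 < vmax -> normE (sat vmax z) <= vmax.
Proof.
move=> vmax_gt0; rewrite /sat; case: ifPn; last by rewrite -leNgt.
move=> vmax_lt; have z_gt0 : 0 < normE z by apply: lt_trans vmax_lt.
by rewrite normEZ ger0_norm ?divfK ?gt_eqF // divr_ge0 ?ltW.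
Qed.

Lemma normE_v_rep_le {n} sigma2 eps ravoid (P : 'I_n -> 'rV[R]_d) i :
  0 < sigma2 -> 0 < eps -> 0 < ravoid ->
  normE (v_rep sigma2 eps ravoid P i) <= sigma2 * (n%:R * ravoid).
Proof.
move=> s2_gt0 eps_gt0 r_gt0; rewrite /v_rep normEZ ger0_norm ?(ltW s2_gt0) // ler_pM2l //.
apply: le_trans (ler_normE_sum _ _ _) _.
rewrite big_mkcond /= mulr_natl -[n in _ *+ n]card_ord -sumr_const.
apply: ler_sum => j _.
case: ifPn => [/andP[_ near_j]|_]; last exact: ltW.
rewrite normEZ; set r := normE (P i - P j).
have r_ge0 : 0 <= r := normE_ge0 _.
rewrite ger0_norm; last by rewrite divr_ge0 ?subr_ge0 // addr_ge0 // ltW.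
rewrite mulrAC ler_pdivrMr ?ltr_wpDl //.
have : 0 <= ravoid - r by rewrite subr_ge0.
nra.
Qed.

End Commands.

Section MeanShift.
Context {R : realType} {d n m : nat} (q : 'I_m -> 'rV[R]_d) (beta : R).
Implicit Types (P : 'I_n -> 'rV[R]_d) (i : 'I_n) (k : 'I_m).

Definition ms_weight P i k := (mass q beta P k)^-1 * kw beta (q k) (P i).
Definition ms_weight_sum P i := \sum_(k < m) ms_weight P i k.
Definition ms_drift P i := \sum_(k < m) ms_weight P i k *: (q k - P i).

Lemma kw_gt0 (x y : 'rV[R]_d) : 0 < kw beta x y.
Proof. exact: expR_gt0. Qed.

Lemma mass_gt0 P i k : 0 < mass q beta P k.
Proof.
rewrite /mass mulr_gt0 ?invr_gt0 ?ltr0n ?(leq_ltn_trans _ (ltn_ord i)) //.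
by rewrite (bigD1 i) //= ltr_pwDl ?kw_gt0 // sumr_ge0 // => j _; rewrite ltW ?kw_gt0.
Qed.

Lemma ms_weight_gt0 P i k : 0 < ms_weight P i k.
Proof. by rewrite mulr_gt0 ?invr_gt0 ?kw_gt0 // (mass_gt0 _ i). Qed.

Lemma ms_weight_sum_gt0 P i : (0 < m)%N -> 0 < ms_weight_sum P i.
Proof.
move=> m_gt0; rewrite /ms_weight_sum (bigD1 (Ordinal m_gt0)) //=.
by rewrite ltr_pwDl ?ms_weight_gt0 // sumr_ge0 // => k _; apply/ltW/ms_weight_gt0.
Qed.

Hypothesis beta_ge0 : 0 <= beta.

Lemma kw_le1 (x y : 'rV[R]_d) : kw beta x y <= 1.
Proof. by rewrite /kw expR_le1 mulNr oppr_le0 mulr_ge0 ?sqr_ge0. Qed.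

Lemma mass_le1 P i k : mass q beta P k <= 1.
Proof.
have n_gt0 : 0 < n%:R :> R by rewrite ltr0n (leq_ltn_trans _ (ltn_ord i)).
rewrite /mass ler_pdivrMl // mulr1 -[n in n%:R]card_ord -sumr_const.
by apply: ler_sum => j _; apply: kw_le1.
Qed.

(* masses are at most 1, so each weight dominates its kernel value *)
Lemma kw_le_ms_weight_sum P i k : kw beta (q k) (P i) <= ms_weight_sum P i.
Proof.
rewrite /ms_weight_sum (bigD1 k) //=; apply: ler_wpDr.
  by apply: sumr_ge0 => j _; apply/ltW/ms_weight_gt0.
by rewrite ler_peMl ?(ltW (kw_gt0 _ _)) // invf_ge1 ?(mass_gt0 _ i) ?(mass_le1 _ i).
Qed.

Lemma v_msE sigma1 P i :
  v_ms q beta sigma1 P i = (sigma1 / m%:R / ms_weight_sum P i) *: ms_drift P i.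
Proof. by []. Qed.

Lemma v_ms_mean sigma1 P i : (0 < m)%N ->
  v_ms q beta sigma1 P i =
  (sigma1 / m%:R) *: ((ms_weight_sum P i)^-1 *: \sum_(k < m) ms_weight P i k *: q k - P i).
Proof.
move=> m_gt0; rewrite v_msE -scalerA; congr (_ *: _).
rewrite /ms_drift; under eq_bigr do rewrite scalerBr.
rewrite sumrB scalerBr -scaler_suml scalerA mulVf ?scale1r //.
by rewrite gt_eqF ?ms_weight_sum_gt0.
Qed.

Lemma normE_v_ms_le sigma1 P i : (0 < m)%N -> 0 < sigma1 ->
  normE (v_ms q beta sigma1 P i) <= sigma1 / m%:R * \sum_(l < m) normE (q l - P i).
Proof.
move=> m_gt0 s1_gt0; have W_gt0 := ms_weight_sum_gt0 P i m_gt0.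
have s_gt0 : 0 < sigma1 / m%:R by rewrite divr_gt0 // ltr0n.
rewrite v_msE normEZ ger0_norm; last exact/divr_ge0/ltW/W_gt0/ltW.
rewrite -[_ / ms_weight_sum P i * _]mulrA ler_pM2l // ler_pdivrMl //.
apply: le_trans (ler_normE_sum _ _ _) _.
rewrite /ms_weight_sum mulr_suml; apply: ler_sum => k _.
rewrite normEZ ger0_norm ?(ltW (ms_weight_gt0 _ _ _)) // ler_pM2l ?ms_weight_gt0 //.
by rewrite (bigD1 k) //= lerDl sumr_ge0 // => l _; apply: normE_ge0.
Qed.

Lemma dotE_v_ms_le sigma1 P i (c : 'rV[R]_d) : (0 < m)%N -> 0 < sigma1 ->
  dotE (P i - c) (v_ms q beta sigma1 P i) <=
  sigma1 / m%:R * (normE (P i - c) * (\sum_(l < m) normE (q l - c) - normE (P i - c))).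
Proof.
move=> m_gt0 s1_gt0; set Q := \sum_(l < m) _; set x := P i - c.
have W_gt0 := ms_weight_sum_gt0 P i m_gt0.
have s_gt0 : 0 < sigma1 / m%:R by rewrite divr_gt0 // ltr0n.
rewrite v_msE dotEZr -[_ / ms_weight_sum P i * _]mulrA ler_pM2l // ler_pdivrMl //.
rewrite /ms_drift dotEC dotE_suml /ms_weight_sum mulr_suml.
apply: ler_sum => k _; rewrite dotEZl ler_pM2l ?ms_weight_gt0 //.
have -> : q k - P i = (q k - c) - x by rewrite /x opprB addrA subrK.
rewrite dotEBl -normE_sqr.
have := dotE_le_normE (q k - c) x; have : normE (q k - c) <= Q.
  by rewrite /Q (bigD1 k) //= lerDl sumr_ge0 // => l _; apply: normE_ge0.
have := normE_ge0 x.
set a := normE x; set e := normE (q k - c); set f := dotE (q k - c) x; nra.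
Qed.

Lemma distE_le_normE_v_ms sigma1 P i (S : set 'rV[R]_d) : (0 < m)%N -> 0 < sigma1 ->
  convex_setE S -> (forall k, S (q k)) ->
  sigma1 / m%:R * distE (P i) S <= normE (v_ms q beta sigma1 P i).
Proof.
move=> m_gt0 s1_gt0 convS Sq.
have s_gt0 : 0 < sigma1 / m%:R by rewrite divr_gt0 // ltr0n.
rewrite v_ms_mean // normEZ ger0_norm ?(ltW s_gt0) // ler_pM2l // normE_subC.
apply: distE_le_normE; apply: convex_setE_comb => // k; exact: ms_weight_gt0.
Qed.

End MeanShift.

Section Derivatives.
Context {R : realType} {d : nat}.
Implicit Types (f g : R -> 'rV[R]_d) (t : R) (v w : 'rV[R]_d).

Lemma is_derive_coord (j : 'I_d) {f t v} :
  is_derive t 1 f v -> is_derive t 1 (fun s => f s 0 j) (v 0 j).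
Proof.
move=> [df dfE]; have := derive_mx df; rewrite dfE => ->; rewrite mxE.
exact/derivableP/((derivable_mxP f t 1).1 df).
Qed.

Lemma is_derive_dotE {f g t v w} :
  is_derive t 1 f v -> is_derive t 1 g w ->
  is_derive t 1 (fun s => dotE (f s) (g s)) (dotE v (g t) + dotE (f t) w).
Proof.
move=> df dg; rewrite /dotE -big_split /=.
have := is_derive_sum (fun j => is_deriveM (is_derive_coord j df) (is_derive_coord j dg)).
rewrite fct_sumE => /is_derive_eq; apply.
by apply: eq_bigr => j _; rewrite addrC [g t 0 j *: _]mulrC.
Qed.

Lemma is_derive_subl (c : 'rV[R]_d) {f t v} :
  is_derive t 1 f v -> is_derive t 1 (fun s => c - f s) (- v).
Proof. by move=> df; have := is_deriveB (is_derive_cst c t 1) df; rewrite sub0r. Qed.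

Lemma is_derive_subr (c : 'rV[R]_d) {f t v} :
  is_derive t 1 f v -> is_derive t 1 (fun s => f s - c) v.
Proof. by move=> df; have := is_deriveB df (is_derive_cst c t 1); rewrite subr0. Qed.

Lemma is_derive_kw beta (c : 'rV[R]_d) {f t v} : is_derive t 1 f v ->
  is_derive t 1 (fun s => kw beta c (f s)) (kw beta c (f t) * (2 * beta * dotE (c - f t) v)).
Proof.
move=> df; have dcf := is_derive_subl c df.
have -> : (fun s => kw beta c (f s)) =
          fun s => expR (- beta * dotE (c - f s) (c - f s)).
  by apply/funext => s; rewrite /kw normE_sqr.
apply: is_derive_eq.
  exact: is_derive1_comp (is_derive_expR _) (is_deriveZ (- beta) (is_derive_dotE dcf dcf)).
rewrite /kw normE_sqr dotENl (dotEC _ (- v)) dotENl (dotEC v) /GRing.scale /=.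
by congr (_ * _); ring.
Qed.

End Derivatives.

Section LogMassDerivative.
Context {R : realType} {d n m : nat} (q : 'I_m -> 'rV[R]_d) (beta : R).
Variables (p : 'I_n -> R -> 'rV[R]_d) (V : 'I_n -> 'rV[R]_d) (t : R).
Hypothesis dp : forall j, is_derive t 1 (p j) (V j).

Lemma is_derive_mass k :
  is_derive t 1 (fun s => mass q beta (fun j => p j s) k)
    (n%:R^-1 * \sum_(j < n) kw beta (q k) (p j t) * (2 * beta * dotE (q k - p j t) (V j))).
Proof.
have := is_deriveZ n%:R^-1 (is_derive_sum (fun j => is_derive_kw beta (q k) (dp j))).
by rewrite fct_sumE.
Qed.

Lemma is_derive_sum_ln_mass (i : 'I_n) :
  is_derive t 1 (fun s => \sum_(k < m) ln (mass q beta (fun j => p j s) k))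
    (2 * beta / n%:R * \sum_(j < n) dotE (ms_drift q beta (fun j => p j t) j) (V j)).
Proof.
have := is_derive_sum (fun k : 'I_m =>
  @is_derive1_comp _ (@ln R) (fun s => mass q beta (fun j => p j s) k) t _ _
    (is_derive1_ln (mass_gt0 q beta (fun j => p j t) i k)) (is_derive_mass k)).
rewrite fct_sumE => /is_derive_eq; apply.
under eq_bigr do rewrite mulr_sumr mulr_sumr.
rewrite exchange_big mulr_sumr; apply: eq_bigr => j _.
rewrite /ms_drift dotE_suml mulr_sumr; apply: eq_bigr => k _.
by rewrite dotEZl /ms_weight; lra.
Qed.

End LogMassDerivative.

Section OneVariable.
Context {R : realType} {h dh : R -> R} {a : R}.
Hypothesis dh_h : forall t, a <= t -> is_derive t 1 h (dh t).

Lemma derive_continuous_within x y : a <= x -> {within `[x, y], continuous h}.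
Proof.
move=> ax; apply: derivable_within_continuous => s; rewrite in_itv /= => /andP[xs _].
by have [] := dh_h _ (le_trans ax xs).
Qed.

Lemma increment_ge L {x y} : a <= x -> x <= y ->
  (forall s, x <= s <= y -> L <= dh s) -> h x + L * (y - x) <= h y.
Proof.
move=> ax xy L_dh.
have dh_xy s : s \in `]x, y[ -> is_derive s 1 h (dh s).
  by rewrite in_itv /= => /andP[xs _]; apply: dh_h; lra.
have [c] := MVT_segment xy dh_xy (derive_continuous_within x y ax).
rewrite in_itv /= => xcy hyx; rewrite -lerBrDl hyx.
by apply: ler_wpM2r; [rewrite subr_ge0 | apply: L_dh].
Qed.

Lemma continuous_gt_left {f : R -> R} {c L : R} : {for c, continuous f} -> L < f c ->
  a < c -> exists2 y, a <= y < c & forall s, y <= s <= c -> L < f s.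
Proof.
move=> fc Lfc ac.
have := cvgr_dist_lt _ _ fc (f c - L).
rewrite subr_gt0 => /(_ _ Lfc) /nbhs_ballP[e /= e_gt0 near_c].
exists (Num.max a (c - e / 2)).
  by rewrite le_max lexx /= gt_max ac /= ltrBlDr ltrDl divr_gt0.
move=> s /andP[]; rewrite ge_max => /andP[_ ces] sc.
have /near_c /= : ball c e s.
  by rewrite /ball /= ger0_norm ?subr_ge0 //; lra.
by have := ler_norm (f c - f s); lra.
Qed.

(* A maximiser [c] of [h] on [a, t] with [h c > L] must be [a]: otherwise [h] decreases on a
   left neighbourhood of [c], so it is larger just before [c]. *)
Lemma le_max_of_derive_lt0 L : (forall t, a <= t -> L < h t -> dh t < 0) ->
  forall t, a <= t -> h t <= Num.max (h a) L.
Proof.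
move=> dh_lt0 t at_; rewrite leNgt; apply/negP => ht_gt.
have [c] := EVT_max at_ (derive_continuous_within a t (lexx a)).
rewrite in_itv /= => /andP[ac ct] hc_max.
have htc : h t <= h c by apply: hc_max; rewrite in_itv /= at_ lexx.
have Lhc : L < h c by move: ht_gt; rewrite gt_max; case/andP; lra.
have hahc : h a < h c by move: ht_gt; rewrite gt_max; case/andP; lra.
have ac' : a < c by rewrite lt_neqAle ac andbT; apply: contraTneq hahc => ->; rewrite ltxx.
have [dc _] := dh_h c ac.
have hc_cont : {for c, continuous h}.
  exact/differentiable_continuous/derivable1_diffP.
have [y /andP[ay yc] Lh] := continuous_gt_left hc_cont Lhc ac'.
have dh_yc s : s \in `]y, c[ -> is_derive s 1 h (dh s).
  by rewrite in_itv /= => /andP[ys _]; apply: dh_h; lra.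
have [s sI hchy] := MVT yc dh_yc (derive_continuous_within y c ay).
move: sI; rewrite in_itv /= => /andP[ys sc].
have dhs_lt0 : dh s < 0 by apply: dh_lt0; [lra | apply: Lh; lra].
have : h y <= h c by apply: hc_max; rewrite in_itv /= ay; lra.
have : dh s * (c - y) < 0 by rewrite pmulr_llt0 // subr_gt0.
lra.
Qed.

End OneVariable.

Section Barbalat.
Context {R : realType}.
Variables (H dH D : R -> R) (a kap L B : R).
Hypotheses (kap_gt0 : 0 < kap) (L_gt0 : 0 < L).
Hypothesis dH_H : forall t, a <= t -> is_derive t 1 H (dH t).
Hypothesis D_dH : forall t, a <= t -> kap * D t ^+ 2 <= dH t.
Hypothesis H_le : forall t, H t <= B.
Hypothesis D_ge0 : forall t, 0 <= D t.
Hypothesis D_lipschitz : forall x y, a <= x -> x <= y -> D x - L * (y - x) <= D y.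

Let dH_ge0 t : a <= t -> 0 <= dH t.
Proof. by move=> at_; apply: le_trans (D_dH _ at_); rewrite mulr_ge0 ?sqr_ge0 ?ltW. Qed.

Lemma lyapunov_nondecreasing {x y} : a <= x -> x <= y -> H x <= H y.
Proof.
move=> ax xy; have := increment_ge dH_H 0 ax xy.
by rewrite mul0r addr0; apply=> s /andP[xs _]; apply/dH_ge0/(le_trans ax xs).
Qed.

(* [D >= e / 2] on [t, t + e / (2 L)] by the Lipschitz bound, so [dH >= kap (e / 2)^2] there *)
Lemma lyapunov_gain {e t} : 0 < e -> a <= t -> e < D t ->
  H t + kap * (e / 2) ^+ 2 * (e / (2 * L)) <= H (t + e / (2 * L)).
Proof.
move=> e_gt0 at_ De; set del := e / (2 * L).
have del_gt0 : 0 < del by rewrite divr_gt0 ?mulr_gt0.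
have Ldel : L * del = e / 2 by rewrite /del; field; rewrite gt_eqF.
have t_del : t <= t + del by rewrite lerDl ltW.
have := increment_ge dH_H (kap * (e / 2) ^+ 2) at_ t_del.
rewrite addrAC subrr add0r; apply=> s /andP[ts st].
apply: le_trans (D_dH _ (le_trans at_ ts)).
rewrite ler_pM2l // ler_sqr ?nnegrE ?D_ge0 ?divr_ge0 ?ltW //.
have := D_lipschitz _ _ at_ ts; have : L * (s - t) <= e / 2.
  by rewrite -Ldel ler_pM2l //; lra.
lra.
Qed.

Lemma barbalat_cvg0 : D @ +oo --> (0 : R).
Proof.
apply/cvgrPdist_le => e e_gt0.
have [[T DT]|] := pselect (exists T, forall t, T < t -> D t <= e).
  by exists T; split; [exact: num_real | move=> t /DT; rewrite sub0r normrN ger0_norm].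
move=> no_T; exfalso.
have late_bump T : exists2 t, T < t & e < D t.
  apply: contra_notP no_T => no_t; exists T => t Tt.
  by rewrite leNgt; apply/negP => eDt; apply: no_t; exists t.
set eta := kap * (e / 2) ^+ 2 * (e / (2 * L)).
have eta_gt0 : 0 < eta by rewrite !(mulr_gt0, exprn_gt0, divr_gt0, invr_gt0).
have H_unbounded (N : nat) : exists2 T, a <= T & H a + N%:R * eta <= H T.
  elim: N => [|N [T aT HT]]; first by exists a; rewrite ?mul0r ?addr0.
  have [t Tt eDt] := late_bump T.
  have at_ : a <= t by apply: le_trans aT (ltW Tt).
  exists (t + e / (2 * L)); first by rewrite (le_trans at_) // lerDl divr_ge0 ?mulr_ge0 ?ltW.
  have := lyapunov_nondecreasing aT (ltW Tt); have := lyapunov_gain e_gt0 at_ eDt.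
  by rewrite -/eta -natr1 mulrDl mul1r; lra.
have [T _] := H_unbounded (Num.trunc ((B - H a) / eta)).+1.
have := truncnS_gt ((B - H a) / eta); rewrite -(ltr_pM2r eta_gt0) divfK ?gt_eqF //.
by have := H_le T; lra.
Qed.

End Barbalat.

Lemma normE_increment_le {R : realType} {d : nat} (f V : R -> 'rV[R]_d) (a vmax : R) :
  (forall t, a <= t -> is_derive t 1 f (V t)) -> (forall t, a <= t -> normE (V t) <= vmax) ->
  forall x y, a <= x -> x <= y -> normE (f y - f x) <= vmax * (y - x).
Proof.
move=> df V_le x y ax xy; set w := f y - f x.
(* mean value theorem for [s |-> - (f s - f x) . w] on [x, y] *)
have dg s : a <= s -> is_derive s 1 (fun s => - dotE (f s - f x) w)
    (- (dotE (V s) w + dotE (f s - f x) 0)).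
  move=> as_; apply: is_deriveN.
  exact: is_derive_dotE (is_derive_subr _ (df s as_)) (is_derive_cst w s 1).
have dg_ge s : x <= s <= y -> - (vmax * normE w) <= - (dotE (V s) w + dotE (f s - f x) 0).
  move=> /andP[xs _]; rewrite lerN2 dotE0r addr0 (le_trans (dotE_le_normE _ _)) //.
  by rewrite ler_wpM2r ?normE_ge0 ?V_le // (le_trans ax xs).
have := increment_ge dg _ ax xy dg_ge.
rewrite subrr dotE0l oppr0 add0r -[f y - f x]/w -normE_sqr mulNr lerN2.
have [->|w_neq0] := eqVneq (normE w) 0.
  by rewrite mulr_ge0 ?subr_ge0 // (le_trans (normE_ge0 (V x))) ?V_le.
by rewrite expr2 mulrAC ler_pM2r // lt0r w_neq0 normE_ge0.
Qed.

Section ClosedLoop.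
Context {R : realType} {d n m : nat} (q : 'I_m -> 'rV[R]_d).
Variables (beta sigma1 sigma2 eps ravoid vmax : R).
Hypotheses (m_gt0 : (0 < m)%N) (beta_gt0 : 0 < beta) (s1_gt0 : 0 < sigma1)
  (s2_gt0 : 0 < sigma2) (eps01 : 0 < eps < 1) (r_gt0 : 0 < ravoid) (vmax_gt0 : 0 < vmax).
Implicit Types (P : 'I_n -> 'rV[R]_d) (i j : 'I_n) (c : 'rV[R]_d).

Local Notation ms := (v_ms q beta sigma1).
Local Notation cv := (v_cv q beta sigma1 sigma2 eps ravoid).
Local Notation cl := (closed_loop q beta sigma1 sigma2 eps ravoid vmax).
Local Notation drift := (ms_drift q beta).
Local Notation s := (sigma1 / m%:R).
Local Notation C := (sigma2 * (n%:R * ravoid)).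

Let eps_gt0 : 0 < eps. Proof. by case/andP: eps01. Qed.
Let s_gt0 : 0 < s. Proof. by rewrite divr_gt0 // ltr0n. Qed.

Lemma normE_v_cv_le P i : normE (cv P i) <= C.
Proof.
have [/andP[k_ge0 k_le1] _] := kappa2_spec q beta sigma1 sigma2 eps ravoid P i eps01.
rewrite /v_cv normEZ ger0_norm //.
apply: le_trans (normE_v_rep_le sigma2 eps ravoid P i s2_gt0 eps_gt0 r_gt0).
by rewrite ler_piMl ?normE_ge0.
Qed.

(* [ms_drift = (ms_weight_sum / s) v_ms], and [sat] rescales by some [f >= vmax / (vmax + Z)] *)
Lemma dotE_drift_closed_loop_ge P j {Z : R} : normE (ms P j) + C <= Z ->
  ms_weight_sum q beta P j / s * (vmax / (vmax + Z)) * (eps * normE (ms P j) ^+ 2)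
  <= dotE (drift P j) (cl P j).
Proof.
move=> msZ; have W_gt0 := ms_weight_sum_gt0 q beta P j m_gt0.
have [_ ms_cmd] := kappa2_spec q beta sigma1 sigma2 eps ravoid P j eps01.
have [f cl_f /andP[f_ge f_le1]] := sat_scale vmax (ms P j + cv P j) vmax_gt0.
set z := ms P j + cv P j in ms_cmd cl_f f_ge.
have z_le : normE z <= Z.
  apply: le_trans (ler_normED _ _) (le_trans _ msZ).
  by rewrite lerD2l normE_v_cv_le.
have Z_gt0 : 0 < vmax + Z by rewrite ltr_pwDl // (le_trans (normE_ge0 z)).
have driftE : drift P j = (ms_weight_sum q beta P j / s) *: ms P j.
  by rewrite v_msE scalerA mulrA divfK ?gt_eqF // mulfV ?gt_eqF // scale1r.
rewrite /closed_loop -/z cl_f driftE dotEZl dotEZr -mulrA ler_pM2l; last exact: divr_gt0.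
have f_ge' : vmax / (vmax + Z) <= f.
  apply: le_trans f_ge; rewrite ler_pM2l // lef_pV2 ?posrE ?lerD2l //.
  by rewrite ltr_pwDl ?normE_ge0.
have f_ge0 : 0 <= f by apply: le_trans f_ge'; rewrite divr_ge0 ?ltW.
apply: (@le_trans _ _ (f * (eps * normE (ms P j) ^+ 2))); last exact: ler_wpM2l.
by rewrite ler_wpM2r // mulr_ge0 ?sqr_ge0 ?ltW.
Qed.

Lemma dotE_drift_closed_loop_ge0 P j : 0 <= dotE (drift P j) (cl P j).
Proof.
apply: le_trans (dotE_drift_closed_loop_ge P j (lexx _)).
have C_ge0 : 0 <= C by rewrite !mulr_ge0 ?ler0n ?ltW.
have ms_ge0 := normE_ge0 (ms P j).
have W_gt0 := ms_weight_sum_gt0 q beta P j m_gt0.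
apply: mulr_ge0; last by rewrite mulr_ge0 ?sqr_ge0 ?(ltW eps_gt0).
apply: mulr_ge0; first exact: divr_ge0 (ltW W_gt0) (ltW s_gt0).
by rewrite divr_ge0 ?(ltW vmax_gt0) // !addr_ge0 ?(ltW vmax_gt0).
Qed.

(* far from [c], the meanshift term points back towards the samples and beats the bounded
   collision-avoidance term *)
Lemma dotE_closed_loop_lt0 P i c :
  \sum_(l < m) normE (q l - c) + C / s < normE (P i - c) ->
  dotE (P i - c) (cl P i) < 0.
Proof.
set x := P i - c; set Q := \sum_(l < m) _ => far.
have Q_ge0 : 0 <= Q by rewrite sumr_ge0 // => l _; apply: normE_ge0.
have Cs_ge0 : 0 <= C / s by apply: divr_ge0 (ltW s_gt0); rewrite !mulr_ge0 ?ler0n ?ltW.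
have x_gt0 : 0 < normE x by lra.
have [f cl_f /andP[f_ge _]] := sat_scale vmax (ms P i + cv P i) vmax_gt0.
have f_gt0 : 0 < f.
  by apply: lt_le_trans f_ge; rewrite divr_gt0 ?ltr_pwDl ?normE_ge0.
rewrite /closed_loop cl_f dotEZr pmulr_rlt0 // dotEDr.
have := dotE_v_ms_le q beta sigma1 P i c m_gt0 s1_gt0; rewrite -/x -/Q.
have : dotE x (cv P i) <= normE x * C.
  by apply: le_trans (dotE_le_normE _ _) _; rewrite ler_wpM2l ?normE_ge0 ?normE_v_cv_le.
have : s * normE x * (Q + C / s - normE x) < 0.
  by rewrite pmulr_rlt0 ?subr_lt0 // mulr_gt0.
have -> : s * normE x * (Q + C / s - normE x) = s * (normE x * (Q - normE x)) + normE x * C.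
  by field; rewrite pnatr_eq0 -lt0n m_gt0 gt_eqF.
lra.
Qed.

Lemma dotE_drift_closed_loop_ge_distE (S : set 'rV[R]_d) i k M :
  convex_setE S -> (forall k, S (q k)) -> 0 <= M ->
  exists2 kap, 0 < kap & forall P, normE (P i - q k) <= M ->
    kap * distE (P i) S ^+ 2 <= dotE (drift P i) (cl P i).
Proof.
move=> convS Sq M_ge0; set Q := \sum_(l < m) normE (q l - q k).
set Z := s * (Q + m%:R * M) + C; set w := expR (- beta * M ^+ 2).
have Q_ge0 : 0 <= Q by rewrite sumr_ge0 // => l _; apply: normE_ge0.
have C_ge0 : 0 <= C by rewrite !mulr_ge0 ?ler0n ?ltW.
have Z_ge0 : 0 <= Z by rewrite addr_ge0 // mulr_ge0 ?(ltW s_gt0) // addr_ge0 // mulr_ge0.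
have F_gt0 : 0 < vmax / (vmax + Z) by rewrite divr_gt0 ?ltr_pwDl.
have ws_gt0 : 0 < w / s by rewrite divr_gt0 // expR_gt0.
exists (w / s * (vmax / (vmax + Z)) * (eps * s ^+ 2)).
  by apply: mulr_gt0; [exact: mulr_gt0 | rewrite mulr_gt0 ?exprn_gt0].
move=> P Pi_near.
have ms_le : normE (ms P i) + C <= Z.
  rewrite lerD2r; apply: le_trans (normE_v_ms_le q beta sigma1 P i m_gt0 s1_gt0) _.
  rewrite ler_pM2l // mulr_natl -[m in _ *+ m]card_ord -sumr_const -big_split /=.
  apply: ler_sum => l _.
  have -> : q l - P i = (q l - q k) + (q k - P i) by rewrite addrA subrK.
  by apply: le_trans (ler_normED _ _) _; rewrite lerD2l normE_subC.
apply: le_trans (dotE_drift_closed_loop_ge P i ms_le).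
have D_ge0 : 0 <= distE (P i) S by apply: distE_ge0; exists (q k).
have w_le : w <= ms_weight_sum q beta P i.
  apply: le_trans (kw_le_ms_weight_sum q beta (ltW beta_gt0) P i k).
  rewrite ler_expR !mulNr lerN2 ler_pM2l // normE_subC.
  by rewrite ler_sqr ?nnegrE ?normE_ge0.
have -> : w / s * (vmax / (vmax + Z)) * (eps * s ^+ 2) * distE (P i) S ^+ 2 =
          w / s * (vmax / (vmax + Z)) * (eps * (s * distE (P i) S) ^+ 2) by ring.
apply: ler_pM.
- exact/ltW/mulr_gt0.
- by rewrite mulr_ge0 ?sqr_ge0 ?(ltW eps_gt0).
- by rewrite ler_wpM2r ?(ltW F_gt0) // ler_wpM2r // invr_ge0 ltW.
rewrite ler_wpM2l ?(ltW eps_gt0) // ler_sqr ?nnegrE ?normE_ge0 ?(mulr_ge0 (ltW s_gt0)) //.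
exact: distE_le_normE_v_ms.
Qed.

Variables (p : 'I_n -> R -> 'rV[R]_d) (t1 : R).
Hypothesis dp : forall j t, t1 <= t -> is_derive t 1 (p j) (cl (fun j => p j t) j).

Lemma trajectory_bounded i k :
  exists2 M, 0 <= M & forall t, t1 <= t -> normE (p i t - q k) <= M.
Proof.
set c := q k; set Rb := \sum_(l < m) normE (q l - c) + C / s.
have Rb_ge0 : 0 <= Rb.
  rewrite addr_ge0 ?sumr_ge0 // => [l _|]; first exact: normE_ge0.
  by apply: divr_ge0 (ltW s_gt0); rewrite !mulr_ge0 ?ler0n ?ltW.
pose V t := cl (fun j => p j t) i.
have dh t : t1 <= t -> is_derive t 1 (fun t => dotE (p i t - c) (p i t - c))
    (dotE (V t) (p i t - c) + dotE (p i t - c) (V t)).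
  by move=> t1t; have dx := is_derive_subr c (dp i t t1t); exact: (is_derive_dotE dx dx).
have dh_lt0 t : t1 <= t -> Rb ^+ 2 < dotE (p i t - c) (p i t - c) ->
    dotE (V t) (p i t - c) + dotE (p i t - c) (V t) < 0.
  move=> _; rewrite -normE_sqr ltr_pXn2r ?nnegrE ?normE_ge0 // => far.
  by rewrite dotEC -mulr2n mulrn_wlt0 // dotE_closed_loop_lt0.
set M' := Num.max (dotE (p i t1 - c) (p i t1 - c)) (Rb ^+ 2).
have M'_ge0 : 0 <= M' by rewrite le_max sqr_ge0 orbT.
exists (1 + M'); first by rewrite addr_ge0.
move=> t t1t; have := le_max_of_derive_lt0 dh _ dh_lt0 t t1t; rewrite -/M' -normE_sqr.
by have := normE_ge0 (p i t - c); nra.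
Qed.

Lemma distE_trajectory_cvg0 (S : set 'rV[R]_d) i :
  convex_setE S -> (forall k, S (q k)) -> (fun t => distE (p i t) S) @ +oo --> (0 : R).
Proof.
move=> convS Sq; pose k0 := Ordinal m_gt0; pose P t j := p j t.
have [M M_ge0 p_near] := trajectory_bounded i k0.
have [kap kap_gt0 coercive] := dotE_drift_closed_loop_ge_distE S i k0 M convS Sq M_ge0.
have rate_gt0 : 0 < 2 * beta / n%:R.
  by rewrite divr_gt0 ?mulr_gt0 // ltr0n (leq_ltn_trans _ (ltn_ord i)).
apply: (@barbalat_cvg0 _ (fun t => \sum_(k < m) ln (mass q beta (P t) k))
  (fun t => 2 * beta / n%:R * \sum_(j < n) dotE (drift (P t) j) (cl (P t) j))
  _ t1 (2 * beta / n%:R * kap) vmax 0).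
- exact: mulr_gt0.
- exact: vmax_gt0.
- by move=> t t1t; apply: is_derive_sum_ln_mass => // j; exact: dp.
- move=> t t1t; rewrite -mulrA ler_pM2l // (bigD1 i) //= ler_wpDr //.
    by apply: sumr_ge0 => j _; exact: dotE_drift_closed_loop_ge0.
  exact/coercive/p_near.
- by move=> t; apply: sumr_le0 => k _; exact/ln_le0/(mass_le1 q beta (ltW beta_gt0) (P t) i k).
- by move=> t; apply: distE_ge0; exists (q k0).
move=> x y t1x xy; apply: le_trans (distE_lipschitz (p i x) (p i y) _ _); last by exists (q k0).
rewrite lerD2l lerN2 normE_subC.
apply: (normE_increment_le _ (fun t => cl (P t) i) _ _ (dp i)) => // t _.
exact: normE_sat_le.
Qed.

End ClosedLoop.

Theorem theorem4 (R : realType) (d n m : nat) (hn : (2 <= n)%N) (hm : (0 < m)%N)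
  (q : 'I_m -> 'rV[R]_d)
  (beta sigma1 sigma2 eps ravoid vmax : R)
  (hbeta : 0 < beta) (hs1 : 0 < sigma1) (hs2 : 0 < sigma2)
  (heps : 0 < eps < 1) (hr : 0 < ravoid) (hv : 0 < vmax)
  (S : set 'rV[R]_d) (hSclosed : closed S) (hSconv : convex_setE S)
  (hqS : forall k, S (q k))
  (t0 : R) (p : 'I_n -> R -> 'rV[R]_d)
  (hcont : forall i, {within `[t0, +oo[, continuous (p i)})
  (hode : forall i t, t0 < t ->
     is_derive t 1 (p i)
       (closed_loop q beta sigma1 sigma2 eps ravoid vmax (fun j => p j t) i)) :
  forall i, (fun t => distE (p i t) S) @ +oo --> (0 : R).
Proof.
move=> i; apply: (distE_trajectory_cvg0 q beta sigma1 sigma2 eps ravoid vmax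
  hm hbeta hs1 hs2 heps hr hv p (t0 + 1)) => //.
by move=> j t t1t; apply: hode; lra.
Qed.
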